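(* For any commutative ring $A$, the following are equivalent: (1) $\Gamma(A)$ is path-connected. (2) For any unimodular row $(a,b)$, there exist $a_0,\ldots,a_n\in A$ such that $[a,b]= \infty\cdot S(a_n)S(a_{n-1})\cdots S(a_0)$. (3) Any unimodular pair $(a,b)$ satisfies a weak Euclidean algorithm. (4) $A$ is a $\mathrm{GE}_2$-ring.
   Context: $\Gamma(A)$ is the graph whose vertices are classes $[a,b]$ of unimodular rows modulo multiplication by units, with an edge between $[u],[v]$ when the matrix with rows $u,v$ is in $\mathrm{GL}_2(A)$; $\mathrm{GL}_2(A)$ acts on the right, and $\infty$ denotes the class of $(1,0)$. $S(a)=\left[\begin{smallmatrix}a&1\\1&0\end{smallmatrix}\right]$. A pair $(a,b)$ satisfies a weak Euclidean algorithm if there exist $a_0,\ldots,a_n,r_0,\ldots,r_{n-1}\in A$ such that, with $r_{-2}:=a$, $r_{-1}:=b$, $r_n:=0$, one has $r_{k-2}=a_kr_{k-1}+r_k$ for $0\le k\le n$. $A$ is a $\mathrm{GE}_2$-ring if $\mathrm{GL}_2(A)$ is generated by elementary and invertible diagonal matrices. *)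

From HB Require Import structures.
From mathcomp Require Import all_boot all_order all_algebra.
Set Implicit Arguments. Unset Strict Implicit. Unset Printing Implicit Defensive.
Import GRing.Theory.
Local Open Scope ring_scope.

Section Gamma.
Variable A : comPzRingType.

Definition is_unitA (u : A) : Prop := exists v, u * v = 1.

Definition unimodular (a b : A) : Prop := exists x y, x * a + y * b = 1.

Definition mx2 (a b c d : A) : 'M[A]_2 :=
  \matrix_(i < 2, j < 2)
    if (i == 0 :> nat) then (if (j == 0 :> nat) then a else b)
    else (if (j == 0 :> nat) then c else d).
Definition row2 (a b : A) : 'rV[A]_2 :=
  \row_(j < 2) if (j == 0 :> nat) then a else b.

Definition GL2 (M : 'M[A]_2) : Prop :=
  exists N : 'M[A]_2, M *m N = 1%:M /\ N *m M = 1%:M.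

(* rows (a,b) and (c,d) represent the same vertex [a,b] = [c,d] of Gamma(A) *)
Definition same_class (a b c d : A) : Prop :=
  exists u, is_unitA u /\ c = u * a /\ d = u * b.

(* edge of Gamma(A) between [a,b] and [c,d] (independent of representatives) *)
Definition Gedge (a b c d : A) : Prop := GL2 (mx2 a b c d).

Definition Gamma_connected : Prop :=
  forall a b c d : A, unimodular a b -> unimodular c d ->
    exists (n : nat) (w : nat -> A * A),
      same_class a b (w 0%N).1 (w 0%N).2 /\
      same_class c d (w n).1 (w n).2 /\
      (forall i, (i <= n)%N -> unimodular (w i).1 (w i).2) /\
      (forall i, (i < n)%N -> Gedge (w i).1 (w i).2 (w i.+1).1 (w i.+1).2).

Definition Smx (x : A) : 'M[A]_2 := mx2 x 1 1 0.

Fixpoint Sprod (n : nat) (x : nat -> A) : 'M[A]_2 :=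
  match n with
  | 0%N => Smx (x 0%N)
  | m.+1 => Smx (x m.+1) *m Sprod m x
  end.

(* infty = class of (1,0); right action of GL_2 on classes *)
Definition infty_act (M : 'M[A]_2) : 'rV[A]_2 := row2 1 0 *m M.

Definition reached_by_S (a b : A) : Prop :=
  exists (n : nat) (x : nat -> A) (u : A),
    is_unitA u /\ infty_act (Sprod n x) = u *: row2 a b.

(* weak Euclidean algorithm for (a,b): with r' k := r_(k-2),
   r' 0 = a, r' 1 = b, r' (n+2) = 0 and r_(k-2) = a_k r_(k-1) + r_k, 0<=k<=n *)
Definition weak_euclid (a b : A) : Prop :=
  exists (n : nat) (q r' : nat -> A),
    r' 0%N = a /\ r' 1%N = b /\ r' n.+2 = 0 /\
    (forall k, (k <= n)%N -> r' k = q k * r' k.+1 + r' k.+2).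

Definition GE2_generator (M : 'M[A]_2) : Prop :=
  (exists x, M = mx2 1 x 0 1) \/ (exists x, M = mx2 1 0 x 1) \/
  (exists u v, is_unitA u /\ is_unitA v /\ M = mx2 u 0 0 v).

(* the subgroup generated by elementary and invertible diagonal matrices
   (closed under inverses since the generating set is) *)
Inductive in_GE2 : 'M[A]_2 -> Prop :=
| GE2_one : in_GE2 1%:M
| GE2_mul M N : GE2_generator M -> in_GE2 N -> in_GE2 (M *m N).

Definition GE2_ring : Prop := forall M : 'M[A]_2, GL2 M -> in_GE2 M.

End Gamma.

From mathcomp Require Import all_boot all_algebra ring.
From Stdlib Require Import Relation_Operators Operators_Properties.
Set Implicit Arguments. Unset Strict Implicit. Unset Printing Implicit Defensive.
Import GRing.Theory.
Local Open Scope ring_scope.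

(* Everything is read off the S-words W = S(x_1)...S(x_k) and the rows u.(∞W), u a unit.
   Since S(x)S(0) and S(0)S(x) are the elementary matrices and S(0)^2 = 1, the S-words and
   the invertible diagonal matrices generate GE_2(A), and a diagonal matrix can be pushed
   past an elementary one.  A weak Euclidean algorithm for (a,b) is literally a factorisation
   (a,b) = r.∞S(a_n)...S(a_0), and r is a unit because (a,b) is unimodular.  The key matrix
   fact is that if M and Q are invertible and the first row of M is u times that of Q, then
   MQ^-1 is lower triangular with unit diagonal.  It lets a path starting at ∞ be followed
   edge by edge (each new vertex is again ∞S(x)Q up to a unit), and it writes any
   M in GL_2(A) whose first row is reached from ∞ as elementary * diagonal * S-word.
   Conversely ∞W and ∞S(x)W are adjacent, so every vertex reached this way is joined to ∞. *)

Section Gamma.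
Variable A : comPzRingType.
Implicit Types a b c d p q u x y : A.
Implicit Type s : seq A.

Lemma mx2E (M : 'M[A]_2) : M = mx2 (M 0 0) (M 0 1) (M 1 0) (M 1 1).
Proof.
apply/matrixP => i j; rewrite !mxE.
by case: i => [[|[|i]] ?]; case: j => [[|[|j]] ?] //=; congr (M _ _); apply: val_inj.
Qed.

Lemma row2E (r : 'rV[A]_2) : r = row2 (r 0 0) (r 0 1).
Proof.
by apply/rowP => j; rewrite !mxE; case: j => [[|[|j]] ?] //=; congr (r _ _); apply: val_inj.
Qed.

Lemma mx2_inj a b c d a' b' c' d' : mx2 a b c d = mx2 a' b' c' d' ->
  [/\ a = a', b = b', c = c' & d = d'].
Proof.
by move/matrixP => E; split; [move: (E 0 0) | move: (E 0 1) | move: (E 1 0) | move: (E 1 1)];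
  rewrite !mxE.
Qed.

Lemma row2_inj a b c d : row2 a b = row2 c d -> a = c /\ b = d.
Proof. by move/rowP => E; split; [move: (E 0) | move: (E 1)]; rewrite !mxE. Qed.

Lemma mx2_1 : 1%:M = mx2 1 0 0 1 :> 'M[A]_2.
Proof. by apply/matrixP => i j; rewrite !mxE; case: i => [[|[|i]] ?]; case: j => [[|[|j]] ?]. Qed.

Lemma mx2_mul a b c d e f g h : mx2 a b c d *m mx2 e f g h =
  mx2 (a * e + b * g) (a * f + b * h) (c * e + d * g) (c * f + d * h).
Proof.
apply/matrixP => i j; rewrite !mxE !big_ord_recl big_ord0 !mxE /=.
by case: i => [[|[|i]] ?]; case: j => [[|[|j]] ?] //=; rewrite addr0.
Qed.

Lemma row2_mul a b e f g h : row2 a b *m mx2 e f g h = row2 (a * e + b * g) (a * f + b * h).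
Proof.
apply/rowP => j; rewrite !mxE !big_ord_recl big_ord0 !mxE /=.
by case: j => [[|[|j]] ?] //=; rewrite addr0.
Qed.

Lemma scale_row2 u a b : u *: row2 a b = row2 (u * a) (u * b).
Proof. by apply/rowP => j; rewrite !mxE; case: ifP. Qed.

Lemma infty_act_mx2 a b c d : infty_act (mx2 a b c d) = row2 a b.
Proof. by rewrite /infty_act row2_mul !mul1r !mul0r !addr0. Qed.

Lemma infty_actE (M : 'M[A]_2) : infty_act M = row2 (M 0 0) (M 0 1).
Proof. by rewrite {1}(mx2E M) infty_act_mx2. Qed.

Lemma row2_mul_Smx a b x : row2 a b *m Smx x = row2 (x * a + b) a.
Proof. by rewrite row2_mul; congr row2; ring. Qed.

Lemma unitA1 : is_unitA (1 : A).
Proof. by exists 1; rewrite mulr1. Qed.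

Lemma unitA_mul u v : is_unitA u -> is_unitA v -> is_unitA (u * v).
Proof.
by move=> [u' uu'] [v' vv']; exists (u' * v'); rewrite mulrACA uu' vv' mulr1.
Qed.

Lemma unitA_inv u u' : u * u' = 1 -> is_unitA u'.
Proof. by exists u; rewrite mulrC. Qed.

Lemma unitA_of_unimodular c a b : unimodular (c * a) (c * b) -> is_unitA c.
Proof. by move=> [x [y E]]; exists (x * a + y * b); rewrite -E; ring. Qed.

Lemma scale_unitK (V : lmodType A) u u' (r s : V) : u' * u = 1 -> r = u *: s -> s = u' *: r.
Proof. by move=> uK ->; rewrite scalerA uK scale1r. Qed.

Lemma same_class_sym a b c d : same_class a b c d -> same_class c d a b.
Proof.
move=> [u [[u' uu'] [-> ->]]]; exists u'; split; first exact: unitA_inv uu'.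
by rewrite !mulrA [u' * u]mulrC uu' !mul1r.
Qed.

Lemma same_classP a b c d :
  same_class a b c d <-> exists u, is_unitA u /\ row2 c d = u *: row2 a b.
Proof.
rewrite /same_class; split=> -[u [uu E]]; exists u; split=> //.
  by case: E => -> ->; rewrite scale_row2.
by move: E; rewrite scale_row2 => /row2_inj.
Qed.

Lemma GL2_1 : GL2 (1%:M : 'M[A]_2).
Proof. by exists 1%:M; rewrite mulmx1. Qed.

Lemma GL2_mul (M N : 'M[A]_2) : GL2 M -> GL2 N -> GL2 (M *m N).
Proof.
move=> [M' [MM' M'M]] [N' [NN' N'N]]; exists (N' *m M'); split.
  by rewrite mulmxA -(mulmxA M) NN' mulmx1 MM'.
by rewrite mulmxA -(mulmxA N') M'M mulmx1 N'N.
Qed.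

Lemma GL2_mx2 a b c d a' b' c' d' :
  mx2 a b c d *m mx2 a' b' c' d' = 1%:M -> mx2 a' b' c' d' *m mx2 a b c d = 1%:M ->
  GL2 (mx2 a b c d).
Proof. by move=> l r; exists (mx2 a' b' c' d'). Qed.

Lemma GL2_Smx x : GL2 (Smx x).
Proof. by apply: (@GL2_mx2 _ _ _ _ 0 1 1 (- x)); rewrite mx2_mul mx2_1; congr mx2; ring. Qed.

Lemma GL2_lower x : GL2 (mx2 1 0 x 1).
Proof. by apply: (@GL2_mx2 _ _ _ _ 1 0 (- x) 1); rewrite mx2_mul mx2_1; congr mx2; ring. Qed.

Lemma GL2_unimodular a b c d : GL2 (mx2 a b c d) -> unimodular a b.
Proof.
move=> [N [MN _]]; move: MN; rewrite (mx2E N) mx2_mul mx2_1 => /mx2_inj [E _ _ _].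
by exists (N 0 0), (N 1 0); rewrite -E; ring.
Qed.

Lemma GL2_lower_units u c d : GL2 (mx2 u 0 c d) -> is_unitA u /\ is_unitA d.
Proof.
move=> [N [LN NL]]; move: LN NL; rewrite (mx2E N) !mx2_mul mx2_1.
move=> /mx2_inj [Eu _ _ _] /mx2_inj [_ _ _ Ed].
by split; [exists (N 0 0); rewrite -Eu | exists (N 1 1); rewrite -Ed]; ring.
Qed.

Lemma GL2_factor_lower (M Q : 'M[A]_2) u :
  GL2 M -> GL2 Q -> infty_act M = u *: infty_act Q ->
  exists c d, [/\ is_unitA u, is_unitA d & M = mx2 u 0 c d *m Q].
Proof.
move=> GL_M [Q' [QQ' Q'Q]] EM.
have GL_L : GL2 (M *m Q') by apply: GL2_mul GL_M (ex_intro _ Q (conj Q'Q QQ')).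
have ML : M = (M *m Q') *m Q by rewrite -mulmxA Q'Q mulmx1.
have : infty_act (M *m Q') = row2 u 0.
  rewrite /infty_act mulmxA -/(infty_act M) EM -scalemxAl -mulmxA QQ' mulmx1.
  by rewrite scale_row2 mulr1 mulr0.
rewrite infty_actE => /row2_inj [L00 L01].
move: GL_L; rewrite (mx2E (M *m Q')) L00 L01 => /GL2_lower_units [uu ud].
by exists ((M *m Q') 1 0), ((M *m Q') 1 1); split=> //; rewrite {1}ML {1}(mx2E (M *m Q')) L00 L01.
Qed.

Lemma Gedge_sym a b c d : Gedge a b c d -> Gedge c d a b.
Proof.
rewrite /Gedge; have -> : mx2 c d a b = Smx 0 *m mx2 a b c d by rewrite mx2_mul; congr mx2; ring.
exact: GL2_mul (GL2_Smx 0).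
Qed.

Fixpoint Sword s : 'M[A]_2 := if s is x :: s' then Smx x *m Sword s' else 1%:M.

Lemma GL2_Sword s : GL2 (Sword s).
Proof. by elim: s => [|x s IH] /=; [apply: GL2_1 | apply: GL2_mul (GL2_Smx x) IH]. Qed.

Lemma Smx0_sqr : Smx 0 *m Smx 0 = 1%:M :> 'M[A]_2.
Proof. by rewrite mx2_mul mx2_1; congr mx2; ring. Qed.

Lemma Sprod_Sword n (x : nat -> A) : Sprod n x = Sword [seq x i | i <- rev (iota 0 n.+1)].
Proof.
elim: n => [|n IH]; first by rewrite /= mulmx1.
by rewrite -[n.+2]addn1 iotaD rev_cat /= IH.
Qed.

Lemma Sword_Sprod s : exists n (x : nat -> A), Sword s = Sprod n x.
Proof.
(* Padding by S(0)S(0) = 1 makes the word nonempty, as Sprod requires. *)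
pose t := 0 :: 0 :: s; exists (size s).+1, (nth 0 (rev t)).
rewrite Sprod_Sword map_rev.
have -> : (size s).+2 = size (rev t) by rewrite size_rev.
rewrite -/(mkseq _ _) mkseq_nth revK /=.
by rewrite mulmxA Smx0_sqr mul1mx.
Qed.

Definition Sreachable a b : Prop :=
  exists u s, is_unitA u /\ row2 a b = u *: infty_act (Sword s).

Lemma reached_by_S_Sreachable a b : reached_by_S a b <-> Sreachable a b.
Proof.
split=> [[n [x [u [[u' uu'] E]]]] | [u [s [[u' uu'] E]]]].
  exists u', [seq x i | i <- rev (iota 0 n.+1)]; split; first exact: unitA_inv uu'.
  by rewrite -Sprod_Sword; apply: scale_unitK E; rewrite mulrC.
have [n [x Ex]] := Sword_Sprod s.
exists n, x, u'; split; first exact: unitA_inv uu'.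
by rewrite -Ex; apply: scale_unitK E; rewrite mulrC.
Qed.

Lemma Sreachable_infty : Sreachable (1 : A) 0.
Proof. by exists 1, [::]; split; [exact: unitA1 | rewrite scale1r /infty_act mulmx1]. Qed.

Lemma Sreachable_same_class a b c d : same_class a b c d -> Sreachable c d -> Sreachable a b.
Proof.
move=> /same_classP [v [[v' vv'] Ecd]] [u [s [uu E]]].
exists (v' * u), s; split; first exact: unitA_mul (unitA_inv vv') uu.
by rewrite -scalerA -E; apply: scale_unitK Ecd; rewrite mulrC.
Qed.

Lemma Sreachable_edge p q (p' q' : A) : Sreachable p q -> Gedge p q p' q' -> Sreachable p' q'.
Proof.
move=> [u [s [_ E]]] edge.
have [c [d [_ [d' dd'] M_eq]]] :=
  GL2_factor_lower edge (GL2_Sword s) (etrans (infty_act_mx2 _ _ _ _) E).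
(* The edge matrix is [[u,0],[c,d]] W, so its second row is d.(∞ S(d^-1 c) W). *)
exists d, (d' * c :: s); split; first by exists d'.
have -> : row2 p' q' = row2 c d *m Sword s.
  have -> : row2 p' q' = row2 0 1 *m mx2 p q p' q' by rewrite row2_mul; congr row2; ring.
  by rewrite M_eq mulmxA row2_mul; congr (row2 _ _ *m _); ring.
rewrite /infty_act /= mulmxA row2_mul_Smx scalemxAl scale_row2; congr (row2 _ _ *m _).
  by rewrite mulr1 addr0 mulrA dd' mul1r.
by rewrite mulr1.
Qed.

Lemma Gamma_connected_Sreachable a b : Gamma_connected A -> unimodular a b -> Sreachable a b.
Proof.
move=> conn ab; have [|n [w [w0 [wn [_ edges]]]]] := conn 1 0 a b _ ab.
  by exists 1, 0; rewrite mulr1 mulr0 addr0.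
suff reach k : (k <= n)%N -> Sreachable (w k).1 (w k).2.
  exact: Sreachable_same_class wn (reach n _).
elim: k => [_ | k IH kn]; first exact: Sreachable_same_class (same_class_sym w0) Sreachable_infty.
exact: Sreachable_edge (IH (ltnW kn)) (edges k kn).
Qed.

Definition Gadj (v w : A * A) : Prop := Gedge v.1 v.2 w.1 w.2.

Definition row0 (M : 'M[A]_2) : A * A := (M 0 0, M 0 1).

Lemma Gadj_Smx x (M : 'M[A]_2) : GL2 M -> Gadj (row0 M) (row0 (Smx x *m M)).
Proof.
rewrite /Gadj /Gedge /row0 (mx2E M) mx2_mul !mxE /= => GL_M.
have -> : mx2 (M 0 0) (M 0 1) (x * M 0 0 + 1 * M 1 0) (x * M 0 1 + 1 * M 1 1)
          = mx2 1 0 x 1 *m mx2 (M 0 0) (M 0 1) (M 1 0) (M 1 1).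
  by rewrite mx2_mul; congr mx2; ring.
exact: GL2_mul (GL2_lower x) GL_M.
Qed.

Lemma Sword_path (s : seq A) : clos_refl_trans _ Gadj (1, 0) (row0 (Sword s)).
Proof.
elim: s => [|x s IH]; first by rewrite /row0 /= !mxE; apply: rt_refl.
exact: rt_trans IH (rt_step _ _ _ _ (Gadj_Smx x (GL2_Sword s))).
Qed.

Lemma Gadj_path_sym v w : clos_refl_trans _ Gadj v w -> clos_refl_trans _ Gadj w v.
Proof.
elim=> [v' w' /Gedge_sym e | v' | u' v' w' _ IHuv _ IHvw].
- exact: rt_step.
- exact: rt_refl.
- exact: rt_trans IHvw IHuv.
Qed.

Lemma Gadj_path_walk v w : clos_refl_trans _ Gadj v w -> unimodular v.1 v.2 ->
  exists n (W : nat -> A * A), [/\ W 0%N = v, W n = w,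
    forall i, (i <= n)%N -> unimodular (W i).1 (W i).2 &
    forall i, (i < n)%N -> Gadj (W i) (W i.+1)].
Proof.
move=> vw; elim: {v w vw}(clos_rt_rt1n _ _ _ _ vw) => [v | v v' w e _ IH] uv.
  by exists 0%N, (fun=> v); split=> // -[].
have [n [W [W0 Wn unimW edgeW]]] := IH (GL2_unimodular (Gedge_sym e)).
exists n.+1, (fun i => if i is i'.+1 then W i' else v); split=> //.
  by case=> [|i /unimW].
by case=> [_ | i /edgeW] //=; rewrite W0.
Qed.

Lemma Sreachable_Gamma_connected :
  (forall a b, unimodular a b -> Sreachable a b) -> Gamma_connected A.
Proof.
move=> reach a b c d ab cd.
have [u [s [uu Eab]]] := reach a b ab.
have [v [t [vv Ecd]]] := reach c d cd.
have unim_s : unimodular (row0 (Sword s)).1 (row0 (Sword s)).2.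
  by have := GL2_Sword s; rewrite {1}(mx2E (Sword s)); apply: GL2_unimodular.
have [n [W [W0 Wn unimW edgeW]]] :=
  Gadj_path_walk (rt_trans _ _ _ _ _ (Gadj_path_sym (Sword_path s)) (Sword_path t)) unim_s.
exists n, W; rewrite W0 Wn; split; [|split=> //];
  apply: same_class_sym; apply/same_classP; rewrite /row0 /= -infty_actE.
  by exists u.
by exists v.
Qed.

Lemma in_GE2_mul (M N : 'M[A]_2) : in_GE2 M -> in_GE2 N -> in_GE2 (M *m N).
Proof.
elim=> [|G M' genG _ IH] GE_N; first by rewrite mul1mx.
by rewrite -mulmxA; apply: GE2_mul genG (IH GE_N).
Qed.

Lemma in_GE2_generator (G : 'M[A]_2) : GE2_generator G -> in_GE2 G.
Proof. by move=> genG; rewrite -(mulmx1 G); apply: GE2_mul genG (GE2_one A). Qed.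

Lemma in_GE2_upper x : in_GE2 (mx2 1 x 0 1).
Proof. by apply: in_GE2_generator; left; exists x. Qed.

Lemma in_GE2_lower x : in_GE2 (mx2 1 0 x 1).
Proof. by apply: in_GE2_generator; right; left; exists x. Qed.

Lemma in_GE2_diag u v : is_unitA u -> is_unitA v -> in_GE2 (mx2 u 0 0 v).
Proof. by move=> uu vv; apply: in_GE2_generator; right; right; exists u, v. Qed.

Lemma Smx_upper x : Smx x *m Smx 0 = mx2 1 x 0 1.
Proof. by rewrite mx2_mul; congr mx2; ring. Qed.

Lemma Smx_lower x : Smx 0 *m Smx x = mx2 1 0 x 1.
Proof. by rewrite mx2_mul; congr mx2; ring. Qed.

Lemma in_GE2_Smx x : in_GE2 (Smx x).
Proof.
have -> : Smx x = mx2 1 x 0 1 *m (mx2 1 1 0 1 *m (mx2 1 0 (-1) 1 *m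
                   (mx2 1 1 0 1 *m mx2 (-1) 0 0 1))).
  by rewrite !mx2_mul; congr mx2; ring.
have unit_m1 : is_unitA (-1 : A) by exists (-1); rewrite mulrNN mulr1.
do 4!apply: in_GE2_mul (in_GE2_upper _) _ || apply: in_GE2_mul (in_GE2_lower _) _.
exact: in_GE2_diag unit_m1 unitA1.
Qed.

Lemma in_GE2_Sword (s : seq A) : in_GE2 (Sword s).
Proof. by elim: s => [|x s IH] /=; [apply: GE2_one | apply: in_GE2_mul (in_GE2_Smx x) IH]. Qed.

Lemma upper_diag_comm u u' v y : u * u' = 1 ->
  mx2 1 y 0 1 *m mx2 u 0 0 v = mx2 u 0 0 v *m mx2 1 (u' * y * v) 0 1.
Proof. by move=> uu'; rewrite !mx2_mul !mulrA uu'; congr mx2; ring. Qed.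

Lemma lower_diag_comm u v v' y : v * v' = 1 ->
  mx2 1 0 y 1 *m mx2 u 0 0 v = mx2 u 0 0 v *m mx2 1 0 (v' * y * u) 1.
Proof. by move=> vv'; rewrite !mx2_mul !mulrA vv'; congr mx2; ring. Qed.

Lemma in_GE2_diag_Sword (M : 'M[A]_2) : in_GE2 M ->
  exists u v (s : seq A), [/\ is_unitA u, is_unitA v & M = mx2 u 0 0 v *m Sword s].
Proof.
elim=> [|G _ genG _ [u [v [s [uu vv ->]]]]].
  by exists 1, 1, [::]; rewrite /= mulmx1 mx2_1; split=> //; apply: unitA1.
have [[u' uu'] [v' vv']] := (uu, vv).
case: genG => [[y ->] | [[y ->] | [u1 [v1 [uu1 [vv1 ->]]]]]].
- exists u, v, (u' * y * v :: 0 :: s); split=> //.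
  by rewrite mulmxA (upper_diag_comm _ _ uu') -Smx_upper /= !mulmxA.
- exists u, v, (0 :: v' * y * u :: s); split=> //.
  by rewrite mulmxA (lower_diag_comm _ _ vv') -Smx_lower /= !mulmxA.
- exists (u1 * u), (v1 * v), s; split; try exact: unitA_mul.
  by rewrite mulmxA mx2_mul; congr (mx2 _ _ _ _ *m _); ring.
Qed.

Lemma lower_triangular_factor u u' c d : u * u' = 1 ->
  mx2 u 0 c d = mx2 1 0 (c * u') 1 *m mx2 u 0 0 d.
Proof. by move=> uu'; rewrite mx2_mul -(mulrA c) [u' * u]mulrC uu'; congr mx2; ring. Qed.

Lemma Sreachable_GE2_ring : (forall a b, unimodular a b -> Sreachable a b) -> GE2_ring A.
Proof.
move=> reach M; rewrite (mx2E M) => GL_M.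
have [u [s [_ E]]] := reach _ _ (GL2_unimodular GL_M).
have [c [d [[u' uu'] dd ->]]] :=
  GL2_factor_lower GL_M (GL2_Sword s) (etrans (infty_act_mx2 _ _ _ _) E).
rewrite (lower_triangular_factor _ _ uu') -mulmxA.
apply: in_GE2_mul (in_GE2_lower _) (in_GE2_mul (in_GE2_diag _ dd) (in_GE2_Sword s)).
by exists u'.
Qed.

Lemma GE2_ring_Sreachable a b : GE2_ring A -> unimodular a b -> Sreachable a b.
Proof.
move=> GE [x [y xy]].
have GL_M : GL2 (mx2 a b (- y) x).
  by apply: (@GL2_mx2 _ _ _ _ x (- b) y a); rewrite mx2_mul mx2_1; congr mx2; rewrite -?xy; ring.
have [u [v [s [uu _ EM]]]] := in_GE2_diag_Sword (GE _ GL_M).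
exists u, s; split=> //.
rewrite -(infty_act_mx2 a b (- y) x) EM /infty_act mulmxA -/(infty_act _) infty_act_mx2.
by rewrite scalemxAl scale_row2 mulr1 mulr0.
Qed.

Lemma weak_euclid_mull x b : weak_euclid (x * b) b.
Proof.
exists 0%N, (fun=> x), (fun k => if k is 0 then x * b else if k is 1 then b else 0).
by do 3!split=> //; case=> // _; rewrite addr0.
Qed.

Lemma weak_euclid_cons x b c : weak_euclid b c -> weak_euclid (x * b + c) b.
Proof.
move=> [n [q [r [r0 [r1 [rn rk]]]]]].
exists n.+1, (fun k => if k is k'.+1 then q k' else x),
  (fun k => if k is k'.+1 then r k' else x * b + c).
by do 3!split=> //; case=> [_ | k /rk] //=; rewrite r0 r1.
Qed.

Lemma Sprod_shift n (x : nat -> A) : Sprod n.+1 x = Sprod n (fun i => x i.+1) *m Smx (x 0%N).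
Proof.
elim: n x => [|n IH] x //.
by rewrite -[Sprod n.+2 x]/(Smx (x n.+2) *m Sprod n.+1 x) IH mulmxA.
Qed.

Lemma reached_weak_euclid a b : reached_by_S a b -> weak_euclid a b.
Proof.
move=> [n [x [u [[u' uu'] E]]]].
have {u E uu'} : row2 a b = u' *: infty_act (Sprod n x) by apply: scale_unitK E; rewrite mulrC.
elim: n x u' a b => [|n IH] x c a b.
  rewrite /= infty_act_mx2 scale_row2 => /row2_inj [-> ->].
  by rewrite mulr1 mulrC; apply: weak_euclid_mull.
rewrite Sprod_shift /infty_act mulmxA scalemxAl -/(infty_act _).
rewrite [c *: _]row2E row2_mul_Smx => /row2_inj [-> ->].
by apply/weak_euclid_cons/(IH _ c); rewrite -row2E.
Qed.

Lemma remainders_Sprod n (q r : nat -> A) :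
  (forall k, (k <= n)%N -> r k = q k * r k.+1 + r k.+2) ->
  row2 (r 0%N) (r 1%N) = row2 (r n.+1) (r n.+2) *m Sprod n q.
Proof.
elim: n => [|n IH] rk; first by rewrite /= row2_mul_Smx -rk.
rewrite IH => [|k kn]; last exact/rk/ltnW.
by rewrite /= mulmxA row2_mul_Smx -rk.
Qed.

Lemma weak_euclid_reached a b : unimodular a b -> weak_euclid a b -> reached_by_S a b.
Proof.
move=> ab [n [q [r [r0 [r1 [rn rk]]]]]].
have E : row2 a b = r n.+1 *: infty_act (Sprod n q).
  by rewrite -r0 -r1 (remainders_Sprod rk) rn /infty_act scalemxAl scale_row2 mulr1 mulr0.
have [r' rr'] : is_unitA (r n.+1).
  move: E ab; rewrite [infty_act _]row2E scale_row2 => /row2_inj [-> ->].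
  exact: unitA_of_unimodular.
exists n, q, r'; split; first exact: unitA_inv rr'.
by apply: scale_unitK E; rewrite mulrC.
Qed.

End Gamma.

Theorem proposition3p7 (A : comPzRingType) :
  [<-> Gamma_connected A;
       (forall a b : A, unimodular a b -> reached_by_S a b);
       (forall a b : A, unimodular a b -> weak_euclid a b);
       GE2_ring A].
Proof.
tfae.
- by move=> conn a b ab; apply/reached_by_S_Sreachable/Gamma_connected_Sreachable.
- by move=> reach a b ab; apply/reached_weak_euclid/reach.
- move=> euclid; apply: Sreachable_GE2_ring => a b ab.
  by apply/reached_by_S_Sreachable/weak_euclid_reached/euclid.
- move=> GE; apply: Sreachable_Gamma_connected => a b; exact: GE2_ring_Sreachable.
Qed.
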